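(* Let $d\ge 8$ be an even integer and let $B$ be a bubble gadget that is properly attached to $S$ in a graph $G$. Then no two distinct vertices of $B$ are $d$-twins in the induced subgraph $G[V(B)\cup S]$.
   Context: Two distinct vertices $u,v$ of a graph $H$ are $d$-twins in $H$ if $|(N_H(u)\setminus N_H[v])\cup(N_H(v)\setminus N_H[u])|\le d$ (open/closed neighborhoods). The $a\times b$ rook graph has vertex set $\{(i,j): i\in[a], j\in[b]\}$, two distinct vertices being adjacent iff they agree in the first or in the second coordinate; view it as a grid with rows and columns. A bubble gadget $B$ (for $d$) is the $w\times w$ rook graph with $w=d/2+2$, minus the two rightmost vertices of its top row (so the top row has $d/2$ vertices and the rightmost column has $d/2+1$ vertices). If $B$ is an induced subgraph of a graph $G$ and $S$ is the set of vertices of $V(G)\setminus V(B)$ having a neighbor in $V(B)$, then $B$ is properly attached to $S$ in $G$ if every vertex of the top row and every vertex of the rightmost column of $B$ has one or two neighbors in $V(G)\setminus V(B)$, while every other vertex of $B$ has no neighbor outside $V(B)$. *)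

From mathcomp Require Import all_boot.
Set Implicit Arguments. Unset Strict Implicit. Unset Printing Implicit Defensive.

Definition simple_graph (T : finType) (adj : rel T) : Prop :=
  symmetric adj /\ irreflexive adj.

(* Bubble gadget for d: the w x w rook graph, w = d/2 + 2, minus the two
   rightmost vertices of its top row.  Vertex (i, j): row i (row 0 = top),
   column j (column w-1 = rightmost). *)
Definition bub_w (d : nat) : nat := d./2 + 2.

Definition bubble_pred (d : nat) (p : 'I_(bub_w d) * 'I_(bub_w d)) : bool :=
  ~~ ((p.1 == 0 :> nat) && (d./2 <= p.2)).

Definition bubbleV (d : nat) := {p : 'I_(bub_w d) * 'I_(bub_w d) | @bubble_pred d p}.

Definition bub_adj (d : nat) (x y : bubbleV d) : bool :=
  (x != y) && (((val x).1 == (val y).1) || ((val x).2 == (val y).2)).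

Definition top_or_right (d : nat) (x : bubbleV d) : bool :=
  ((val x).1 == 0 :> nat) || ((val x).2 == (bub_w d).-1 :> nat).

Definition induced_copy (d : nat) (T : finType) (adj : rel T) (f : bubbleV d -> T) : Prop :=
  injective f /\ forall x y, adj (f x) (f y) = bub_adj x y.

Definition bubble_set (d : nat) (T : finType) (f : bubbleV d -> T) : {set T} :=
  [set f x | x in [set: bubbleV d]].

Definition attach_set (T : finType) (adj : rel T) (VB : {set T}) : {set T} :=
  [set z | (z \notin VB) && [exists y in VB, adj z y]].

Definition properly_attached (d : nat) (T : finType) (adj : rel T) (f : bubbleV d -> T) : Prop :=
  forall x : bubbleV d,
    let n := #|[set z | (z \notin bubble_set f) && adj (f x) z]| in
    if top_or_right x then (n == 1) || (n == 2) else n == 0.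

Definition d_twins (T : finType) (adj : rel T) (VH : {set T}) (d : nat) (u v : T) : Prop :=
  [/\ u \in VH, v \in VH, u != v &
   #|[set z in VH | ((adj u z && ~~ adj v z && (z != v))
                   || (adj v z && ~~ adj u z && (z != u)))]| <= d].

From mathcomp Require Import all_boot zify.
Set Implicit Arguments. Unset Strict Implicit. Unset Printing Implicit Defensive.

(** Inside the rook-like gadget the neighbourhoods of two distinct vertices
   already differ a lot: two vertices in a common line differ on the rest of
   their two other lines, and two vertices in no common line differ on their
   two rows and on the column of one of them (up to the crossing points).
   With rows of length k = d/2 (top) or k + 2 and columns of length k + 1
   (the two right ones) or k + 2, this gives at least d differences, and at
   least d + 1 unless exactly one of the two vertices lies in the top row or
   the rightmost column.  In that last case proper attachment provides an
   outside neighbour of that vertex which the other one, having no outside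
   neighbour at all, cannot share. *)

Definition twin_diff (T : finType) (adj : rel T) (VH : {set T}) (u v : T) : {set T} :=
  [set z in VH | (adj u z && ~~ adj v z && (z != v)) || (adj v z && ~~ adj u z && (z != u))].

Lemma twin_diffC (T : finType) (adj : rel T) (VH : {set T}) (u v : T) :
  twin_diff adj VH u v = twin_diff adj VH v u.
Proof. by apply/setP=> z; rewrite !inE orbC. Qed.

Lemma subset_imset_twin_diff (T1 T2 : finType) (adj1 : rel T1) (adj2 : rel T2)
    (g : T1 -> T2) (VH1 : {set T1}) (VH2 : {set T2}) (u v : T1) :
    injective g -> (forall a b, adj2 (g a) (g b) = adj1 a b) -> g @: VH1 \subset VH2 ->
  g @: twin_diff adj1 VH1 u v \subset twin_diff adj2 VH2 (g u) (g v).
Proof.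
move=> g_inj g_adj /subsetP sub; apply/subsetP=> _ /imsetP[z + ->].
by rewrite !inE !g_adj !(inj_eq g_inj) => /andP[/(imset_f g)/sub-> ->].
Qed.

Lemma card_ord_lt (n m : nat) : m <= n -> #|[set t : 'I_n | t < m]| = m.
Proof.
move=> le_mn; have -> : [set t : 'I_n | t < m] = widen_ord le_mn @: [set: 'I_m].
  apply/setP=> t; rewrite inE; apply/idP/imsetP=> [lt_tm|[s _ ->]] /=; last exact: ltn_ord.
  by exists (Ordinal lt_tm); rewrite ?inE //; apply: val_inj.
rewrite card_imset ?cardsT ?card_ord // => i j /(congr1 val) /= eq_ij; exact: ord_inj.
Qed.

Lemma card_notin_seq_geq (T : finType) (A : {set T}) (s : seq T) :
  #|A| - size s <= #|[set t in A | t \notin s]|.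
Proof.
have -> : [set t in A | t \notin s] = A :\: [set t in s] by apply/setP=> t; rewrite !inE andbC.
rewrite leq_subLR -(cardsID [set t in s] A) leq_add2r.
apply: leq_trans (subset_leq_card (subsetIr _ _)) _.
by rewrite cardsE card_size.
Qed.

Lemma cardsU_disjoint (T : finType) (A B : {set T}) :
  [disjoint A & B] -> #|A :|: B| = #|A| + #|B|.
Proof. by move=> dis; rewrite cardsU (disjoint_setI0 dis) cards0 subn0. Qed.

Section BubbleGadget.
Variable d : nat.
Local Notation k := d./2.
Local Notation w := (bub_w d).
Local Notation V := (bubbleV d).

Lemma card_bubble_row (a : 'I_w) (R : pred 'I_w) :
  #|[set z : V | ((val z).1 == a) && R (val z).2]| = #|[set t | bubble_pred (a, t) && R t]|.
Proof.
rewrite -(@card_in_imset _ _ (fun z : V => (val z).2)).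
  apply: eq_card => t; rewrite [RHS]inE; apply/imsetP/idP.
  - case=> z; rewrite inE => /andP[/eqP <- Rz] ->.
    by rewrite -surjective_pairing Rz andbT; apply: valP.
  - case/andP=> at_in Rt; exists (exist (@bubble_pred d) (a, t) at_in) => //.
    by rewrite inE /= eqxx Rt.
move=> z1 z2; rewrite !inE => /andP[/eqP a1 _] /andP[/eqP a2 _] eq2; apply: val_inj.
by rewrite [val z1]surjective_pairing [val z2]surjective_pairing a1 a2 eq2.
Qed.

Lemma card_bubble_col (c : 'I_w) (R : pred 'I_w) :
  #|[set z : V | ((val z).2 == c) && R (val z).1]| = #|[set t | bubble_pred (t, c) && R t]|.
Proof.
rewrite -(@card_in_imset _ _ (fun z : V => (val z).1)).
  apply: eq_card => t; rewrite [RHS]inE; apply/imsetP/idP.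
  - case=> z; rewrite inE => /andP[/eqP <- Rz] ->.
    by rewrite -surjective_pairing Rz andbT; apply: valP.
  - case/andP=> tc_in Rt; exists (exist (@bubble_pred d) (t, c) tc_in) => //.
    by rewrite inE /= eqxx Rt.
move=> z1 z2; rewrite !inE => /andP[/eqP c1 _] /andP[/eqP c2 _] eq1; apply: val_inj.
by rewrite [val z1]surjective_pairing [val z2]surjective_pairing c1 c2 eq1.
Qed.

Lemma card_row_notin_geq (a : 'I_w) (s : seq 'I_w) :
  (if a == 0 :> nat then k else w) - size s
    <= #|[set z : V | ((val z).1 == a) && ((val z).2 \notin s)]|.
Proof.
rewrite (card_bubble_row a (fun t => t \notin s)) /bubble_pred /=.
case: ifP => a0 /=.
- have := card_notin_seq_geq [set t : 'I_w | t < k] s.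
  rewrite card_ord_lt ?leq_addr // => /leq_trans; apply; apply: subset_leq_card.
  by apply/subsetP=> t; rewrite !inE -ltnNge.
- have := card_notin_seq_geq [set: 'I_w] s; rewrite cardsT card_ord => /leq_trans; apply.
  by apply: subset_leq_card; apply/subsetP=> t; rewrite !inE.
Qed.

Lemma card_col_notin_geq (c : 'I_w) (s : seq 'I_w) :
  (if k <= c then w.-1 else w) - size s
    <= #|[set z : V | ((val z).2 == c) && ((val z).1 \notin s)]|.
Proof.
rewrite (card_bubble_col c (fun t => t \notin s)) /bubble_pred /=.
case: ifP => kc.
- have w_gt0 : 0 < w by rewrite /bub_w addn2.
  have := card_notin_seq_geq (~: [set t : 'I_w | t < 1]) s.
  rewrite cardsCs setCK card_ord card_ord_lt // subn1 => /leq_trans; apply.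
  by apply: subset_leq_card; apply/subsetP=> t; rewrite !inE andbT ltnS leqn0.
- have := card_notin_seq_geq [set: 'I_w] s; rewrite cardsT card_ord => /leq_trans; apply.
  by apply: subset_leq_card; apply/subsetP=> t; rewrite !inE andbF.
Qed.

Lemma bubble_neqE (x z : V) :
  (z != x) = ((val z).1 != (val x).1 :> nat) || ((val z).2 != (val x).2 :> nat).
Proof. by rewrite -negb_and; congr (~~ _); apply/eqP/andP=> [->|[/eqP ? /eqP ?]] //. Qed.

Lemma ord_eqE n (i j : 'I_n) : (i == j) = (i == j :> nat). Proof. by []. Qed.

Lemma bub_wE : w = k + 2. Proof. by []. Qed.

Local Notation sdiff x y := (twin_diff (@bub_adj d) [set: V] x y).

Ltac bubble_sets := move=> z; rewrite ?inE /bub_adj ?bubble_neqE /= ?ord_eqE; lia.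

Lemma card_sdiff_same_row (x y : V) : (val x).1 = (val y).1 -> x != y ->
  k.*2 + (top_or_right x == top_or_right y) <= #|sdiff x y|.
Proof.
case: x y => [[a b] x_in] [[c e] y_in] /= /(congr1 (@nat_of_ord _)) eq_ac.
rewrite bubble_neqE /top_or_right /= => ne_xy; set D := sdiff _ _.
have := card_col_notin_geq b [:: a]; have := card_col_notin_geq e [:: a].
set C1 := [set z : V | ((val z).2 == b) && ((val z).1 \notin [:: a])].
set C2 := [set z : V | ((val z).2 == e) && ((val z).1 \notin [:: a])].
have sub : C1 :|: C2 \subset D by apply/subsetP; bubble_sets.
have dis : [disjoint C1 & C2] by rewrite disjoint_subset; apply/subsetP; bubble_sets.
have := subset_leq_card sub; rewrite cardsU_disjoint //.
have := ltn_ord a; have := ltn_ord b; have := ltn_ord e; have := bub_wE.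
have := x_in; have := y_in; rewrite /bubble_pred /=.
by case: ifP; case: ifP; lia.
Qed.

Lemma card_sdiff_same_col (x y : V) : (val x).2 = (val y).2 -> x != y ->
  k.*2 + (top_or_right x == top_or_right y) <= #|sdiff x y|.
Proof.
case: x y => [[a b] x_in] [[c e] y_in] /= /(congr1 (@nat_of_ord _)) eq_be.
rewrite bubble_neqE /top_or_right /= => ne_xy; set D := sdiff _ _.
have := card_row_notin_geq a [:: b]; have := card_row_notin_geq c [:: b].
set R1 := [set z : V | ((val z).1 == a) && ((val z).2 \notin [:: b])].
set R2 := [set z : V | ((val z).1 == c) && ((val z).2 \notin [:: b])].
have sub : R1 :|: R2 \subset D by apply/subsetP; bubble_sets.
have dis : [disjoint R1 & R2] by rewrite disjoint_subset; apply/subsetP; bubble_sets.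
have := subset_leq_card sub; rewrite cardsU_disjoint //.
have := ltn_ord a; have := ltn_ord b; have := ltn_ord c; have := bub_wE.
have := x_in; have := y_in; rewrite /bubble_pred /=.
by case: ifP; case: ifP; lia.
Qed.

Hypothesis k_ge4 : 4 <= k.

Lemma card_sdiff_cross (x y : V) : (val x).1 != (val y).1 -> (val x).2 != (val y).2 ->
  k.*2 + 1 <= #|sdiff x y|.
Proof.
case: x y => [[a b] x_in] [[c e] y_in] /=; rewrite !ord_eqE => ne_ac ne_be.
set D := sdiff _ _.
have := card_row_notin_geq a [:: b; e]; have := card_row_notin_geq c [:: b; e].
have := card_col_notin_geq b [:: a; c].
set R1 := [set z : V | ((val z).1 == a) && ((val z).2 \notin [:: b; e])].
set R2 := [set z : V | ((val z).1 == c) && ((val z).2 \notin [:: b; e])].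
set C1 := [set z : V | ((val z).2 == b) && ((val z).1 \notin [:: a; c])].
have sub : R1 :|: R2 :|: C1 \subset D by apply/subsetP; bubble_sets.
have dis12 : [disjoint R1 & R2] by rewrite disjoint_subset; apply/subsetP; bubble_sets.
have dis3 : [disjoint R1 :|: R2 & C1] by rewrite disjoint_subset; apply/subsetP; bubble_sets.
have := subset_leq_card sub; rewrite !cardsU_disjoint //=.
have := bub_wE.
by case: ifP; case: ifP; case: ifP; lia.
Qed.

Lemma card_bubble_sdiff (x y : V) : x != y ->
  k.*2 + (top_or_right x == top_or_right y) <= #|sdiff x y|.
Proof.
move=> ne_xy.
have [eq_row|ne_row] := eqVneq (val x).1 (val y).1; first exact: card_sdiff_same_row.
have [eq_col|ne_col] := eqVneq (val x).2 (val y).2; first exact: card_sdiff_same_col.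
by apply: leq_trans (card_sdiff_cross ne_row ne_col); rewrite leq_add2l leq_b1.
Qed.

End BubbleGadget.

Section ProperAttachment.
Variables (d : nat) (T : finType) (adj : rel T) (f : bubbleV d -> T).
Hypotheses (adj_sym : symmetric adj) (f_induced : induced_copy adj f)
  (f_attached : properly_attached adj f).
Local Notation VB := (bubble_set f).
Local Notation VH := (VB :|: attach_set adj VB).

Lemma mem_bubble_set (x : bubbleV d) : f x \in VB.
Proof. exact: imset_f. Qed.

Lemma outside_twin_diff (a b : bubbleV d) : top_or_right a -> ~~ top_or_right b ->
  exists2 z, z \notin VB & z \in twin_diff adj VH (f a) (f b).
Proof.
move=> tor_a tor_b.
have [z] : exists z, z \in [set z | (z \notin VB) && adj (f a) z].
  by apply/card_gt0P; have := f_attached a; rewrite /= tor_a => /orP[] /eqP ->.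
rewrite inE => /andP[z_out adj_az]; exists z => //.
have := f_attached b; rewrite /= (negPf tor_b) => /eqP/cards0_eq/setP/(_ z).
rewrite !inE z_out adj_az /= => -> /=; rewrite orbF; apply/andP; split.
  by apply/orP; right; apply/existsP; exists (f a); rewrite mem_bubble_set adj_sym.
by apply: contraNneq z_out => ->; apply: mem_bubble_set.
Qed.

Lemma card_twin_diff_geq (x y : bubbleV d) :
  #|twin_diff (@bub_adj d) [set: bubbleV d] x y| + (top_or_right x != top_or_right y)
    <= #|twin_diff adj VH (f x) (f y)|.
Proof.
have [f_inj f_adj] := f_induced.
set S := twin_diff _ _ x y; set X := twin_diff _ _ _ _.
have sub : f @: S \subset X by apply: subset_imset_twin_diff => //; apply: subsetUl.
rewrite -(card_imset _ f_inj).
have [_|ne_tor] := eqVneq; first by rewrite addn0 subset_leq_card.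
have [z z_out z_in] : exists2 z, z \notin VB & z \in X.
  have [tor_x|tor_x] := boolP (top_or_right x).
    by apply: outside_twin_diff => //; case: (top_or_right y) ne_tor; rewrite tor_x.
  rewrite /X twin_diffC; apply: outside_twin_diff => //.
  by case: (top_or_right y) ne_tor; rewrite (negPf tor_x).
rewrite addn1; apply: proper_card; apply/properP; split=> //; exists z => //.
by apply: contra z_out => /imsetP[v _ ->]; apply: mem_bubble_set.
Qed.

End ProperAttachment.

Theorem mainTheorem10 (d : nat) (T : finType) (adj : rel T)
  (hG : simple_graph adj) (hd8 : 8 <= d) (hdeven : ~~ odd d)
  (f : bubbleV d -> T) (hB : induced_copy adj f) (hP : properly_attached adj f) :
  forall x y : bubbleV d, x != y ->
    ~ d_twins adj (bubble_set f :|: attach_set adj (bubble_set f)) d (f x) (f y).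
Proof.
move=> x y ne_xy [_ _ _]; apply/negP; rewrite -ltnNge.
have d_double : d = (d./2).*2 by rewrite -[LHS]odd_double_half (negPf hdeven).
have k_ge4 : 4 <= d./2 by lia.
apply: leq_trans (card_twin_diff_geq hG.1 hB hP x y).
have := card_bubble_sdiff k_ge4 ne_xy; lia.
Qed.
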